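(* Let $\gamma>0$, $\beta>0$, $b\in\mathbb{R}$ and fix $t>0$. For $x_3>0$ define \[ u(x_3,t)=\frac{2e^{-bt}}{4\pi\gamma t}\Big[\frac{e^{-\frac{x_3^2}{4\gamma t}}}{\sqrt{4\pi\gamma t}}-\frac{\beta}{2\gamma}e^{\frac{\beta}{\gamma}(x_3+\beta t)}\mathrm{erfc}\Big(\frac{x_3+2\beta t}{\sqrt{4\gamma t}}\Big)\Big],\qquad u_{\rm EBC}(x_3,t)=\frac{e^{-bt}}{(4\pi\gamma t)^{3/2}}\Big(e^{-\frac{x_3^2}{4\gamma t}}-e^{-\frac{(x_3+2\gamma/\beta)^2}{4\gamma t}}\Big). \] Then $u(x_3,t)\neq0$ for all sufficiently large $x_3$, and \[ \lim_{x_3\to\infty}\left|\frac{u_{\rm EBC}(x_3,t)-u(x_3,t)}{u(x_3,t)}\right|=\frac12 . \]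
   Context: $\mathrm{erfc}(\xi)=\frac{2}{\sqrt\pi}\int_\xi^\infty e^{-s^2}ds$. Here $u$ is the exact solution at $x_1=x_2=0$ of the half-space Robin problem with boundary source $\delta(x_1)\delta(x_2)\delta(t)$, and $u_{\rm EBC}$ is the extrapolated-boundary approximation with extrapolation distance $\gamma/\beta$. *)

From Stdlib Require Import Reals Lra.
Open Scope R_scope.

Definition gauss (s : R) : R := exp (- s ^ 2).

(* E is the complementary error function:
   E xi = 2/sqrt(pi) * \int_xi^\infty exp(-s^2) ds, the improper integral
   being the limit as M -> +infinity of the Riemann integrals over [xi, M]. *)
Definition is_erfc (E : R -> R) : Prop :=
  forall xi eps, 0 < eps -> exists M0, forall M (pr : Riemann_integrable gauss xi M),
    M0 < M -> Rabs (2 / sqrt PI * RiemannInt pr - E xi) < eps.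

(* exact solution at x1 = x2 = 0 *)
Definition u (E : R -> R) (gamma beta b x3 t : R) : R :=
  2 * exp (- b * t) / (4 * PI * gamma * t) *
  ( exp (- x3 ^ 2 / (4 * gamma * t)) / sqrt (4 * PI * gamma * t)
    - beta / (2 * gamma) * exp (beta / gamma * (x3 + beta * t))
      * E ((x3 + 2 * beta * t) / sqrt (4 * gamma * t)) ).

Definition uEBC (gamma beta b x3 t : R) : R :=
  exp (- b * t) / Rpower (4 * PI * gamma * t) (3 / 2) *
  ( exp (- x3 ^ 2 / (4 * gamma * t))
    - exp (- (x3 + 2 * gamma / beta) ^ 2 / (4 * gamma * t)) ).

From Stdlib Require Import Reals Lra Psatz.
From Coquelicot Require Import Coquelicot.
Open Scope R_scope.

(* With P the free heat kernel e^{-bt} e^{-x^2/(4 gamma t)} / (4 pi gamma t)^{3/2},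
   one has u = 2 P (1 - w) and uEBC = P (1 - h), where
   w = sqrt(4 pi gamma t) beta/(2 gamma) e^{z^2} erfc z with z = (x + 2 beta t)/sqrt(4 gamma t)
   and h = e^{-((x + 2 gamma/beta)^2 - x^2)/(4 gamma t)}.  The Mills-ratio bound
   e^{z^2} erfc z <= 1/(z sqrt pi) gives w -> 0, clearly h -> 0, and so
   (uEBC - u)/u = (1 - h)/(2 (1 - w)) - 1 -> -1/2. *)

Lemma continuous_gauss s : continuous gauss s.
Proof.
  apply (@ex_derive_continuous R_AbsRing R_NormedModule).
  unfold gauss; auto_derive; auto.
Qed.

Lemma ex_RInt_gauss a c : ex_RInt gauss a c.
Proof.
  apply (@ex_RInt_continuous R_CompleteNormedModule).
  intros; apply continuous_gauss.
Qed.

(* On [z, M] the weight s / z is at least 1, and s / z * exp (- s ^ 2) has the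
   explicit antiderivative - exp (- s ^ 2) / (2 z). *)
Lemma RInt_gauss_bounds z M : 0 < z -> z <= M ->
  0 <= RInt gauss z M <= exp (- z ^ 2) / (2 * z).
Proof.
  intros hz hzM; split.
  - apply RInt_ge_0; auto using ex_RInt_gauss.
    intros; unfold gauss; left; apply exp_pos.
  - set (F := fun s => - exp (- s ^ 2) / (2 * z)).
    assert (hF : is_RInt (fun s => s / z * exp (- s ^ 2)) z M (F M - F z)).
    { apply (@is_RInt_derive R_CompleteNormedModule).
      - intros x _; unfold F; auto_derive; auto. simpl; field; lra.
      - intros x _; apply (@ex_derive_continuous R_AbsRing R_NormedModule).
        auto_derive; auto. }
    apply Rle_trans with (F M - F z).
    + rewrite <- (is_RInt_unique _ _ _ _ hF).
      apply RInt_le; auto using ex_RInt_gauss; [eexists; exact hF |].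
      intros s hs; unfold gauss.
      assert (1 <= s / z) by (apply Rmult_le_reg_r with z; [lra | field_simplify; lra]).
      pose proof (exp_pos (- s ^ 2)); nra.
    + unfold F.
      assert (0 < exp (- M ^ 2) / (2 * z)) by (apply Rdiv_lt_0_compat; [apply exp_pos | lra]).
      unfold Rdiv in *; lra.
Qed.

Lemma erfc_bounds E (HE : is_erfc E) z : 0 < z ->
  0 <= E z <= exp (- z ^ 2) / (z * sqrt PI).
Proof.
  intros hz.
  assert (hpi : 0 < sqrt PI) by apply sqrt_lt_R0, PI_RGT_0.
  assert (approx : forall eps, 0 < eps -> exists I,
            0 <= I <= exp (- z ^ 2) / (2 * z) /\ Rabs (2 / sqrt PI * I - E z) < eps).
  { intros eps heps; destruct (HE z eps heps) as [M0 HM].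
    set (M := Rmax (M0 + 1) z).
    assert (hzM : z <= M) by apply Rmax_r.
    assert (hM0 : M0 < M) by (pose proof (Rmax_l (M0 + 1) z); unfold M; lra).
    pose (pr := ex_RInt_Reals_0 _ _ _ (ex_RInt_gauss z M)).
    exists (RiemannInt pr); split; auto.
    rewrite <- (RInt_Reals _ _ _ pr); auto using RInt_gauss_bounds. }
  assert (hc : 0 < 2 / sqrt PI) by (apply Rdiv_lt_0_compat; lra).
  split; apply Rle_plus_epsilon; intros eps heps;
    destruct (approx eps heps) as [I [[hI0 hI1] hI]]; apply Rabs_def2 in hI.
  - assert (0 <= 2 / sqrt PI * I) by (apply Rmult_le_pos; lra); lra.
  - assert (2 / sqrt PI * I <= 2 / sqrt PI * (exp (- z ^ 2) / (2 * z)))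
      by (apply Rmult_le_compat_l; lra).
    replace (exp (- z ^ 2) / (z * sqrt PI))
      with (2 / sqrt PI * (exp (- z ^ 2) / (2 * z))) by (field; lra).
    lra.
Qed.

Lemma erfc_scaled_bounds E (HE : is_erfc E) z : 0 < z ->
  0 <= exp (z ^ 2) * E z <= / (z * sqrt PI).
Proof.
  intros hz; destruct (erfc_bounds E HE z hz) as [h0 h1].
  pose proof (exp_pos (z ^ 2)); split; [nra |].
  replace (/ (z * sqrt PI)) with (exp (z ^ 2) * (exp (- z ^ 2) / (z * sqrt PI))).
  - apply Rmult_le_compat_l; lra.
  - rewrite exp_Ropp; field.
    split; [apply Rgt_not_eq, sqrt_lt_R0, PI_RGT_0 | lra].
Qed.

Lemma Rpower_3_2 A : 0 < A -> Rpower A (3 / 2) = A * sqrt A.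
Proof.
  intros hA; replace (3 / 2) with (1 + / 2) by field.
  rewrite Rpower_plus, Rpower_1, Rpower_sqrt; auto.
Qed.

Lemma exp_opp_lt y d : 0 < d -> / d <= y -> exp (- y) < d.
Proof.
  intros hd hy.
  assert (hy0 : 0 < y) by (pose proof (Rinv_0_lt_compat d hd); lra).
  pose proof (exp_ineq1_le y).
  rewrite exp_Ropp, <- (Rinv_inv d).
  apply Rinv_lt_contravar; [apply Rmult_lt_0_compat; [apply Rinv_0_lt_compat|apply exp_pos] | ]; lra.
Qed.

Lemma Rabs_half_ratio_sub1 P h w d : 0 < P -> 0 <= h <= d -> 0 <= w <= d -> d <= 1 / 2 ->
  Rabs (Rabs ((P * (1 - h) - 2 * P * (1 - w)) / (2 * P * (1 - w))) - 1 / 2) <= d.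
Proof.
  intros hP hh hw hd.
  set (v := (1 - h) / (2 * (1 - w))).
  replace ((P * (1 - h) - 2 * P * (1 - w)) / (2 * P * (1 - w))) with (v - 1)
    by (unfold v; field; lra).
  assert (hv : v * (2 * (1 - w)) = 1 - h) by (unfold v; field; lra).
  assert (hneg : v - 1 <= 0) by nra.
  rewrite (Rabs_left1 _ hneg); apply Rabs_le; nra.
Qed.

Section HalfSpace.

Variables (erfc : R -> R) (gamma beta b t : R).
Hypotheses (Herfc : is_erfc erfc) (hgamma : 0 < gamma) (hbeta : 0 < beta) (ht : 0 < t).

Let A := 4 * PI * gamma * t.
Let kappa := 4 * gamma * t.

Lemma A_pos : 0 < A.
Proof.
  pose proof PI_RGT_0; unfold A.
  apply Rmult_lt_0_compat; [apply Rmult_lt_0_compat |]; lra.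
Qed.

Lemma kappa_pos : 0 < kappa.
Proof. unfold kappa; apply Rmult_lt_0_compat; lra. Qed.

Lemma sqrt_kappa_sq : sqrt kappa ^ 2 = kappa.
Proof. apply pow2_sqrt; left; apply kappa_pos. Qed.


Definition erfc_arg x := (x + 2 * beta * t) / sqrt kappa.

Definition heat_prefactor x := exp (- b * t) * exp (- x ^ 2 / kappa) / Rpower A (3 / 2).

Definition robin_correction x :=
  sqrt A * (beta / (2 * gamma)) * (exp (erfc_arg x ^ 2) * erfc (erfc_arg x)).

Definition image_correction x := exp (- ((x + 2 * gamma / beta) ^ 2 - x ^ 2) / kappa).

Lemma heat_prefactor_pos x : 0 < heat_prefactor x.
Proof.
  unfold heat_prefactor; rewrite Rpower_3_2 by apply A_pos.
  pose proof A_pos; pose proof (sqrt_lt_R0 A A_pos).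
  pose proof (exp_pos (- b * t)); pose proof (exp_pos (- x ^ 2 / kappa)).
  apply Rdiv_lt_0_compat; nra.
Qed.

Lemma u_factor x : u erfc gamma beta b x t = 2 * heat_prefactor x * (1 - robin_correction x).
Proof.
  pose proof A_pos; pose proof kappa_pos; pose proof (sqrt_lt_R0 A A_pos).
  assert (hs : 0 < sqrt kappa) by apply sqrt_lt_R0, kappa_pos.
  assert (hexp : exp (beta / gamma * (x + beta * t))
                 = exp (- x ^ 2 / kappa) * exp (erfc_arg x ^ 2)).
  { rewrite <- exp_plus; f_equal; unfold erfc_arg.
    replace (((x + 2 * beta * t) / sqrt kappa) ^ 2)
      with ((x + 2 * beta * t) ^ 2 / sqrt kappa ^ 2) by (field; lra).
    rewrite sqrt_kappa_sq; unfold kappa; field; lra. }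
  unfold u, heat_prefactor, robin_correction.
  fold A kappa; fold (erfc_arg x); rewrite hexp, Rpower_3_2 by lra.
  field; repeat split; lra.
Qed.

Lemma uEBC_factor x : uEBC gamma beta b x t = heat_prefactor x * (1 - image_correction x).
Proof.
  pose proof kappa_pos.
  assert (hexp : exp (- (x + 2 * gamma / beta) ^ 2 / kappa)
                 = exp (- x ^ 2 / kappa) * image_correction x).
  { unfold image_correction; rewrite <- exp_plus; f_equal; field; lra. }
  unfold uEBC, heat_prefactor; fold A kappa; rewrite hexp; field.
  rewrite Rpower_3_2 by apply A_pos.
  pose proof A_pos; pose proof (sqrt_lt_R0 A A_pos); nra.
Qed.

Lemma robin_correction_small d : 0 < d ->
  exists X, forall x, X < x -> 0 <= robin_correction x <= d.
Proof.
  intros hd.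
  assert (hs : 0 < sqrt kappa) by apply sqrt_lt_R0, kappa_pos.
  assert (hpi : 0 < sqrt PI) by apply sqrt_lt_R0, PI_RGT_0.
  set (K := sqrt A * (beta / (2 * gamma))).
  assert (hK : 0 < K).
  { apply Rmult_lt_0_compat; [apply sqrt_lt_R0, A_pos | apply Rdiv_lt_0_compat; lra]. }
  exists (sqrt kappa * (K / (sqrt PI * d))); intros x hx.
  assert (hz : K / (sqrt PI * d) < erfc_arg x).
  { unfold erfc_arg; apply Rmult_lt_reg_l with (sqrt kappa); auto.
    field_simplify; nra. }
  assert (hz0 : 0 < erfc_arg x).
  { eapply Rlt_trans; [| exact hz]; apply Rdiv_lt_0_compat; nra. }
  destruct (erfc_scaled_bounds erfc Herfc _ hz0) as [h0 h1].
  unfold robin_correction; fold K; split; [nra |].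
  apply Rle_trans with (K * / (erfc_arg x * sqrt PI)); [apply Rmult_le_compat_l; lra |].
  apply Rmult_le_reg_r with (erfc_arg x * sqrt PI); [nra |].
  field_simplify; [| lra].
  assert (hK' : K = K / (sqrt PI * d) * (sqrt PI * d)) by (field; lra).
  rewrite hK' at 1; assert (0 < sqrt PI * d) by nra; nra.
Qed.

Lemma image_correction_small d : 0 < d ->
  exists X, forall x, X < x -> 0 <= image_correction x <= d.
Proof.
  intros hd; pose proof kappa_pos.
  set (c := 2 * gamma / beta).
  assert (hc : 0 < c) by (apply Rdiv_lt_0_compat; lra).
  exists (kappa / (2 * c * d)); intros x hx.
  assert (hx0 : 0 < x) by (eapply Rlt_trans; [| exact hx]; apply Rdiv_lt_0_compat; nra).
  unfold image_correction; fold c; split; [left; apply exp_pos |].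
  replace (- ((x + c) ^ 2 - x ^ 2) / kappa) with (- ((2 * c * x + c ^ 2) / kappa))
    by (field; lra).
  left; apply exp_opp_lt; auto.
  apply Rmult_le_reg_r with (d * kappa); [nra |].
  field_simplify; [| lra | lra].
  assert (hX : kappa = kappa / (2 * c * d) * (2 * c * d)) by (field; lra).
  rewrite hX at 1; assert (0 < 2 * c * d) by nra; nra.
Qed.

Lemma relative_error_near_half d : 0 < d -> d <= 1 / 2 ->
  exists X, forall x, X < x ->
    u erfc gamma beta b x t <> 0 /\
    Rabs (Rabs ((uEBC gamma beta b x t - u erfc gamma beta b x t)
                / u erfc gamma beta b x t) - 1 / 2) <= d.
Proof.
  intros hd hd2.
  destruct (robin_correction_small d hd) as [X1 HX1].
  destruct (image_correction_small d hd) as [X2 HX2].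
  exists (Rmax X1 X2); intros x hx.
  specialize (HX1 x (Rle_lt_trans _ _ _ (Rmax_l X1 X2) hx)).
  specialize (HX2 x (Rle_lt_trans _ _ _ (Rmax_r X1 X2) hx)).
  pose proof (heat_prefactor_pos x).
  rewrite uEBC_factor, u_factor; split.
  - apply Rgt_not_eq; nra.
  - apply Rabs_half_ratio_sub1; lra.
Qed.

End HalfSpace.

Theorem mainTheorem6 (erfc : R -> R) (Herfc : is_erfc erfc)
  (gamma beta b t : R) (hgamma : 0 < gamma) (hbeta : 0 < beta) (ht : 0 < t) :
  (exists X, forall x3, X < x3 -> u erfc gamma beta b x3 t <> 0) /\
  (forall eps, 0 < eps -> exists X, forall x3, X < x3 ->
     Rabs (Rabs ((uEBC gamma beta b x3 t - u erfc gamma beta b x3 t)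
                 / u erfc gamma beta b x3 t) - 1 / 2) < eps).
Proof.
  pose proof (relative_error_near_half erfc gamma beta b t Herfc hgamma hbeta ht) as near.
  split.
  - destruct (near (1 / 2)) as [X HX]; try lra.
    exists X; intros x hx; apply (HX x hx).
  - intros eps heps.
    assert (hd : 0 < Rmin (1 / 2) (eps / 2)) by (apply Rmin_glb_lt; lra).
    destruct (near _ hd (Rmin_l _ _)) as [X HX].
    exists X; intros x hx; destruct (HX x hx) as [_ hle].
    pose proof (Rmin_r (1 / 2) (eps / 2)); lra.
Qed.
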